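(* Let $n\in\mathbb{N}$ with $n\geq 2$, and let $x,y$ be two distinct symbols not in $\{1,\dots,n\}$. Regard $S_n$ as the subgroup of $S_{n+2}=\mathrm{Sym}(\{1,\dots,n,x,y\})$ consisting of the permutations fixing $x$ and $y$. Then for every $\sigma\in S_n$, the permutation $\sigma^{-1}$ (as an element of $S_{n+2}$) can be written as a product of pairwise distinct transpositions, each of which lies in $S_{n+2}\setminus S_n$ (that is, each transposition moves at least one of $x$, $y$).
   Context: Permutations are composed as functions. $S_{n+2}\setminus S_n$ denotes the set of permutations of $\{1,\dots,n,x,y\}$ that do not fix both $x$ and $y$. *)

From mathcomp Require Import all_boot all_fingroup.
Set Implicit Arguments. Unset Strict Implicit. Unset Printing Implicit Defensive.
Local Open Scope group_scope.

(* The ground set {1,...,n,x,y} is modelled by 'I_n.+2: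
   the values 0..n-1 stand for 1..n, the value n stands for x,
   and the value n+1 stands for y. *)
Definition ptx (n : nat) : 'I_n.+2 := inord n.
Definition pty (n : nat) : 'I_n.+2 := ord_max.

Definition is_transposition (T : finType) (t : {perm T}) : Prop :=
  exists a b : T, a != b /\ t = tperm a b.

(* Composition as functions: compose_fun [:: t1; ...; tk] = t1 o t2 o ... o tk.
   (In MathComp, (s * t) x = t (s x), so this is tk * ... * t1.) *)
Definition compose_fun (T : finType) (l : seq {perm T}) : {perm T} :=
  \prod_(t <- rev l) t.

From mathcomp Require Import all_boot all_fingroup.
From mathcomp Require Import zify.
Set Implicit Arguments. Unset Strict Implicit. Unset Printing Implicit Defensive.
Local Open Scope group_scope.

(* Call x and y the pivots and consider words of distinct transpositions
   (z a) with z a pivot.  A word containing (x y) absorbs a point a it does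
   not move, without changing its product, since (x y) = (x a)(x y)(y a).
   If it moves d, it can be multiplied by (c d) for a point c it does not
   move, by splitting its first factor (z d) into (z d)(z c): the factors
   before it fix c and d, and (z d)(c d) = (z c)(z d).  Starting from
   (c d) = (x y)(y c)(x d)(y d)(x c) and peeling off one transposition
   (c, s c) at a time gives such a word for every s fixing both pivots. *)

Lemma compose_fun_cat (T : finType) (l1 l2 : seq {perm T}) :
  compose_fun (l1 ++ l2) = compose_fun l2 * compose_fun l1.
Proof. by rewrite /compose_fun rev_cat big_cat. Qed.

Lemma compose_fun_cons (T : finType) (t : {perm T}) (l : seq {perm T}) :
  compose_fun (t :: l) = compose_fun l * t.
Proof. by rewrite -cat1s compose_fun_cat /compose_fun big_seq1. Qed.

Lemma compose_fun_rcons (T : finType) (t : {perm T}) (l : seq {perm T}) :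
  compose_fun (rcons l t) = t * compose_fun l.
Proof. by rewrite -cats1 compose_fun_cat /compose_fun big_seq1. Qed.

Lemma compose_fun_fix (T : finType) (l : seq {perm T}) (c : T) :
  (forall t, t \in l -> t c = c) -> compose_fun l c = c.
Proof.
move=> lc; rewrite /compose_fun big_seq.
apply: (big_ind (fun p : {perm T} => p c = c)) => [|p q pc qc|t].
- exact: perm1.
- by rewrite permM pc qc.
- by rewrite mem_rev => /lc.
Qed.

Lemma tperm_commute (T : finType) (s : {perm T}) (c d : T) :
  s c = c -> s d = d -> commute s (tperm c d).
Proof. by move=> sc sd; apply/commute_sym/commgP/conjg_fixP; rewrite tpermJ sc sd. Qed.

Lemma tpermM_pivot (T : finType) (x y a : T) :
  x != y -> x != a -> y != a -> tperm y a * tperm x y * tperm x a = tperm x y.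
Proof.
move=> xy xa ya.
by rewrite [tperm y a * _]conjgC tpermJ tpermR tpermD // -mulgA tperm2 mulg1.
Qed.

Lemma tpermM_shared (T : finType) (z c d : T) :
  z != c -> z != d -> c != d -> tperm z c * tperm z d = tperm z d * tperm c d.
Proof.
by move=> zc zd cd; rewrite conjgC tpermJ tpermL tpermD 1?(tpermC d c) // eq_sym.
Qed.

Ltac decide_eqs := repeat (rewrite ?eqxx /=; match goal with
  | H : is_true (?u != ?v) |- context [?u == ?v] => rewrite (negbTE H)
  | H : is_true (?v != ?u) |- context [?u == ?v] => rewrite (eq_sym u v) (negbTE H)
  | |- context [?u == ?v] => is_var u; is_var v; destruct (eqVneq u v) as [->|?]
  end); rewrite ?eqxx /=; try done.

Lemma tperm_pivot_word (T : finType) (x y c d : T) :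
  x != y -> x != c -> x != d -> y != c -> y != d -> c != d ->
  tperm x y * tperm y c * tperm x d * tperm y d * tperm x c = tperm c d.
Proof. by move=> *; apply/permP => i; rewrite !permM !permE /=; decide_eqs. Qed.

Lemma notin_fixing_word (T : finType) (l : seq {perm T}) (a : T) (t : {perm T}) :
  (forall u, u \in l -> u a = a) -> t a != a -> t \notin l.
Proof. by move=> la; apply: contraNN => /la->. Qed.

Section PivotWords.

Variables (T : finType) (x y : T).
Hypothesis x_neq_y : x != y.

Definition pivot_tperm (A : {set T}) (t : {perm T}) : Prop :=
  exists z a, [/\ z \in [set x; y], a \in A :|: [set x; y], z != a & t = tperm z a].

Definition pivot_word (A : {set T}) (l : seq {perm T}) : Prop :=
  [/\ uniq l, tperm x y \in l, forall t, t \in l -> pivot_tperm A t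
    & forall a, a \in A -> exists2 t, t \in l & t a != a].

Lemma pivot_tpermS (A B : {set T}) (t : {perm T}) :
  A \subset B -> pivot_tperm A t -> pivot_tperm B t.
Proof.
move=> AB [z [a [zP aA za ->]]]; exists z, a; split=> //.
by move: aA; rewrite !inE => /orP[/(subsetP AB)->|->]; rewrite ?orbT.
Qed.

Lemma pivot_word_fix (A : {set T}) (l : seq {perm T}) (a : T) :
  pivot_word A l -> a \notin A :|: [set x; y] -> forall t, t \in l -> t a = a.
Proof.
case=> _ _ lA _ aA t /lA[z [b [zP bA _ ->]]]; apply: tpermD.
  by apply: contraNneq aA => <-; rewrite inE zP orbT.
by apply: contraNneq aA => <-.
Qed.

Lemma pivot_wordU1 (A : {set T}) (l : seq {perm T}) (a : T) :
  pivot_word A l -> a \notin [set x; y] ->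
  exists2 l', pivot_word (a |: A) l' & compose_fun l' = compose_fun l.
Proof.
move=> wl axy; have [aA|aA] := boolP (a \in A).
  by exists l; rewrite // (setUidPr _) ?sub1set.
have aAxy : a \notin A :|: [set x; y] by rewrite inE negb_or aA.
have la := pivot_word_fix wl aAxy.
move: axy; rewrite !inE negb_or => /andP[ax ay].
case: wl => ul xyl lA Acov; case/splitPr: xyl la ul lA Acov => l1 l2 la ul lA Acov.
pose l' := l1 ++ [:: tperm x a, tperm x y, tperm y a & l2].
have l'_perm : perm_eq l' [:: tperm x a, tperm y a & l1 ++ tperm x y :: l2].
  by apply/seq.permP => p; rewrite /l' /= !count_cat /=; lia.
have xa_moves : tperm x a a != a by rewrite tpermR eq_sym.
have ya_moves : tperm y a a != a by rewrite tpermR eq_sym.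
have xa_ya : tperm x a != tperm y a.
  apply/eqP => /permP/(_ x); rewrite tpermL tpermD 1?(eq_sym y) //.
  by move/eqP; rewrite (negbTE ax).
exists l'; last first.
  rewrite /l' !compose_fun_cat !compose_fun_cons -!mulgA; congr (_ * _).
  by rewrite !mulgA tpermM_pivot // eq_sym.
split.
- rewrite (perm_uniq l'_perm) /= inE negb_or xa_ya ul.
  by rewrite !(notin_fixing_word la).
- by rewrite mem_cat !inE eqxx !orbT.
- move=> t; rewrite (perm_mem l'_perm) !inE => /or3P[/eqP->|/eqP->|tl].
  + by exists x, a; split; rewrite ?inE ?eqxx ?orbT // eq_sym.
  + by exists y, a; split; rewrite ?inE ?eqxx ?orbT // eq_sym.
  + by apply: pivot_tpermS (lA t tl); rewrite subsetUr.
- move=> b /setU1P[->|/Acov[t tl tb]].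
    by exists (tperm x a); rewrite // (perm_mem l'_perm) inE eqxx.
  by exists t; rewrite // (perm_mem l'_perm) !inE tl !orbT.
Qed.

Lemma pivot_word_mulU1 (A : {set T}) (l : seq {perm T}) (c d : T) :
  pivot_word A l -> c \notin A :|: [set x; y] -> d \in A -> d \notin [set x; y] ->
  exists2 l', pivot_word (c |: A) l' & compose_fun l' = compose_fun l * tperm c d.
Proof.
move=> wl cAxy dA dxy; have lc := pivot_word_fix wl cAxy.
have cxy : c \notin [set x; y] by move: cAxy; rewrite inE negb_or => /andP[].
have cd : c != d by apply: contraNneq cAxy => ->; rewrite inE dA.
case: wl => ul xyl lA Acov.
have [e0 e0l e0d] := Acov d dA.
have hasd : has (fun t : {perm T} => t d != d) l by apply/hasP; exists e0.
move: ul xyl lA lc Acov; case: (split_find hasd) => e l1 l2 ed l1d ul xyl lA lc Acov.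
have el : e \in rcons l1 e ++ l2 by rewrite mem_cat mem_rcons mem_head.
have [z [b [zxy _ zb Ee]]] := lA e el.
have zc : z != c by apply: contraTneq zxy => ->.
have zd : z != d by apply: contraTneq zxy => ->.
have bd : b = d.
  move: ed; rewrite Ee.
  by case: tpermP => [dz|->|_ _]; [rewrite dz eqxx in zd | | rewrite eqxx].
subst b e.
pose l' := rcons l1 (tperm z d) ++ tperm z c :: l2.
have l'_perm : perm_eq l' (tperm z c :: rcons l1 (tperm z d) ++ l2).
  exact: permEl (perm_catCA _ [:: _] _).
have zc_moves : tperm z c c != c by rewrite tpermR.
exists l'; last first.
  have l1c : compose_fun l1 c = c.
    by apply: compose_fun_fix => t tl1; apply: lc; rewrite mem_cat mem_rcons inE tl1 orbT.
  have l1d' : compose_fun l1 d = d.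
    apply: compose_fun_fix => t tl1; apply/eqP; apply: contraNT l1d => td.
    by apply/hasP; exists t.
  rewrite /l' !compose_fun_cat compose_fun_cons !compose_fun_rcons.
  rewrite -!mulgA (tperm_commute l1c l1d'); congr (_ * _).
  by rewrite !mulgA tpermM_shared.
split.
- by rewrite (perm_uniq l'_perm) /= ul (notin_fixing_word lc).
- by rewrite (perm_mem l'_perm) inE xyl orbT.
- move=> t; rewrite (perm_mem l'_perm) inE => /predU1P[->|tl].
    by exists z, c; split; rewrite // !inE eqxx.
  by apply: pivot_tpermS (lA t tl); rewrite subsetUr.
- move=> a /setU1P[->|/Acov[t tl ta]].
    by exists (tperm z c); rewrite // (perm_mem l'_perm) mem_head.
  by exists t; rewrite // (perm_mem l'_perm) inE tl orbT.
Qed.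

Lemma pivot_word_tperm (c d : T) :
  c != d -> c \notin [set x; y] -> d \notin [set x; y] ->
  exists2 l, pivot_word [set c; d] l & compose_fun l = tperm c d.
Proof.
move=> cd; rewrite !inE !negb_or => /andP[cx cy] /andP[dx dy].
have [xc xd yc yd] : [/\ x != c, x != d, y != c & y != d].
  by split; rewrite eq_sym.
exists [:: tperm x c; tperm y d; tperm x d; tperm y c; tperm x y]; last first.
  by rewrite /compose_fun /= !big_cons big_nil mulg1 !mulgA tperm_pivot_word.
split.
- rewrite /= !inE !negb_or andbT; do !(apply/andP; split);
    apply/negP => /eqP/permP E;
    first [ solve [move/eqP: (E x); rewrite !permE /=; decide_eqs]
          | solve [move/eqP: (E y); rewrite !permE /=; decide_eqs] ].
- by rewrite !inE eqxx !orbT.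
- move=> t; rewrite !inE => /orP[|/orP[|/orP[|/orP[]]]] /eqP->;
    [exists x, c | exists y, d | exists x, d | exists y, c | exists x, y];
    by split; rewrite // !inE ?eqxx ?orbT.
- move=> a; rewrite !inE => /orP[]/eqP->;
    [exists (tperm x c) | exists (tperm y d)]; by rewrite ?inE ?eqxx ?orbT // tpermR.
Qed.

Lemma pivot_word_of_perm_on (A : {set T}) (s : {perm T}) :
  [disjoint A & [set x; y]] -> perm_on A s -> s != 1 ->
  exists (B : {set T}) l, [/\ B \subset A, pivot_word B l & compose_fun l = s].
Proof.
elim: {A}_.+1 {-2}A (ltnSn #|A|) s => // k IH A Ak s Axy sA s1.
have [c sc] : exists c, s c != c.
  apply/existsP; apply: contraNT s1 => /existsPn s_fix.
  by apply/eqP/permP => c; rewrite perm1; apply/eqP; rewrite -[_ == _]negbK s_fix.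
set d := s c; have cd : c != d by rewrite eq_sym.
have cA : c \in A := subsetP sA c sc.
have dA : d \in A by rewrite (perm_closed _ sA).
have cxy : c \notin [set x; y] by rewrite (disjointFr Axy cA).
have dxy : d \notin [set x; y] by rewrite (disjointFr Axy dA).
pose s' := s * tperm c d.
have Es : s = s' * tperm c d by rewrite -mulgA tperm2 mulg1.
have cdA : [set c; d] \subset A by rewrite subUset !sub1set cA dA.
have [s'1|s'n1] := eqVneq s' 1.
  have [l wl El] := pivot_word_tperm cd cxy dxy.
  by exists [set c; d], l; split; rewrite // El Es s'1 mul1g.
have s'A : perm_on (A :\ c) s'.
  apply/subsetP => i s'i; rewrite !inE; apply/andP; split.
    by apply: contraNneq s'i => ->; rewrite permM tpermR.
  by apply: subsetP (perm_onM sA (subset_trans (tperm_on c d) cdA)) i s'i.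
have card_Ac : #|A :\ c| < k by move: Ak; rewrite (cardsD1 c A) cA.
have Acxy : [disjoint A :\ c & [set x; y]] := disjointWl (subsetDl A [set c]) Axy.
have [B [l [BAc wl El]]] := IH (A :\ c) card_Ac s' Acxy s'A s'n1.
have [l1 wl1 El1] := pivot_wordU1 wl dxy.
have cB : c \notin B by apply/negP => /(subsetP BAc); rewrite !inE eqxx.
have cBxy : c \notin (d |: B) :|: [set x; y].
  by rewrite in_setU negb_or cxy andbT in_setU1 negb_or cd.
have [l2 wl2 El2] := pivot_word_mulU1 wl1 cBxy (setU11 d B) dxy.
exists (c |: (d |: B)), l2; split=> //.
  by rewrite !subUset !sub1set cA dA (subset_trans BAc (subsetDl A [set c])).
by rewrite El2 El1 El -Es.
Qed.

Lemma pivot_factorization (s : {perm T}) : s x = x -> s y = y ->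
  exists l, [/\ uniq l, forall t, t \in l -> pivot_tperm [set: T] t & compose_fun l = s].
Proof.
move=> sx sy; have [->|s1] := eqVneq s 1.
  by exists [::]; split; rewrite // /compose_fun big_nil.
have Axy : [disjoint ~: [set x; y] & [set x; y]] by rewrite disjoints_subset.
have sA : perm_on (~: [set x; y]) s.
  apply/subsetP => i si; rewrite !inE; apply: contra si => /orP[]/eqP->.
    by rewrite sx.
  by rewrite sy.
have [B [l [_ [ul _ lB _] El]]] := pivot_word_of_perm_on Axy sA s1.
by exists l; split=> // t /lB; apply: pivot_tpermS; apply: subsetT.
Qed.

End PivotWords.

Theorem theorem1p1 (n : nat) (hn : 2 <= n) (s : {perm 'I_n.+2})
    (hsx : s (ptx n) = ptx n) (hsy : s (pty n) = pty n) :
  exists l : seq {perm 'I_n.+2},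
    [/\ uniq l,
        (forall t, t \in l ->
           is_transposition t /\ (t (ptx n) != ptx n \/ t (pty n) != pty n))
      & s^-1 = compose_fun l].
Proof.
have xy : ptx n != pty n by rewrite -val_eqE /= inordK //; lia.
have s'x : s^-1 (ptx n) = ptx n by rewrite -{1}hsx permK.
have s'y : s^-1 (pty n) = pty n by rewrite -{1}hsy permK.
have [l [ul lP El]] := pivot_factorization xy s'x s'y.
exists l; split=> // t /lP[z [a [zxy _ za ->]]].
split; first by exists z, a.
by move: zxy za; rewrite !inE => /orP[]/eqP-> za; [left | right]; rewrite tpermL eq_sym.
Qed.
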